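(* Let $\mathcal{X}$ be a finite nonempty set of types and $\Phi=(\Phi_{xy})_{x,y\in\mathcal{X}}$ a real matrix with $\Phi_{xy}=\Phi_{yx}$. Let $(n^k)_{k\ge1}$ be a sequence of vectors of nonnegative integers with $N^k=\sum_x n^k_x\to\infty$ and $n^k_x/N^k\to f_x$ for each $x$. Then there exist integer vectors $m^k$ with $0\le m^k_x\le n^k_x$ and stable outcomes $(\mu^k,u^k)$ of the roommate problem with population $m^k$ and surplus $\Phi$ such that: (i) $\bigl(N^k-\sum_x m^k_x\bigr)/N^k\to0$ (the removed subpopulation is asymptotically negligible), and (ii) the average cost per individual of compensating the removed individuals with the payoff of their type tends to zero: $\frac{1}{N^k}\sum_x (n^k_x-m^k_x)u^k_x\to0$.
   Context: Roommate matching with transferable utility for population $m=(m_x)$: $m_x$ individuals of type $x$; a pair of types $\{x,y\}$ (possibly $x=y$) generates surplus $\Phi_{xy}$; singles get $0$. Feasible roommate matchings $\mathcal{P}(m)=\{\mu\in\mathbb{N}^{\mathcal{X}\times\mathcal{X}}:\ \mu_{xy}=\mu_{yx},\ 2\mu_{xx}+\sum_{y\ne x}\mu_{xy}\le m_x\ \forall x\}$; total surplus $S_R(\mu;\Phi)=\sum_x\mu_{xx}\Phi_{xx}+\sum_{x\ne y}\mu_{xy}\Phi_{xy}/2$. An outcome is $(\mu,u)$ with $\mu\in\mathcal{P}(m)$, $u\in\mathbb{R}^{\mathcal{X}}$, $\sum_x m_xu_x=S_R(\mu;\Phi)$; it is stable if $u_x\ge0$ and $u_x+u_y\ge\Phi_{xy}$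 for all $x,y\in\mathcal{X}$. *)

From HB Require Import structures.
From mathcomp Require Import all_boot all_order all_algebra.
From mathcomp Require Import all_classical all_reals.
From mathcomp Require Import all_analysis.
Import numFieldNormedType.Exports.
Set Implicit Arguments. Unset Strict Implicit. Unset Printing Implicit Defensive.
Import Order.TTheory GRing.Theory Num.Theory.
Local Open Scope ring_scope.

Section Roommate.
Variables (R : realType) (X : finType).

Definition feasible (m : X -> nat) (mu : X -> X -> nat) : Prop :=
  (forall x y, mu x y = mu y x) /\
  (forall x, (2 * mu x x + \sum_(y | y != x) mu x y <= m x)%N).

Definition surplusR (Phi : X -> X -> R) (mu : X -> X -> nat) : R :=
  \sum_x (mu x x)%:R * Phi x x
  + \sum_x \sum_(y | y != x) (mu x y)%:R * Phi x y / 2.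

Definition outcome (m : X -> nat) (Phi : X -> X -> R)
  (mu : X -> X -> nat) (u : X -> R) : Prop :=
  feasible m mu /\ \sum_x (m x)%:R * u x = surplusR Phi mu.

Definition stable_outcome (m : X -> nat) (Phi : X -> X -> R)
  (mu : X -> X -> nat) (u : X -> R) : Prop :=
  outcome m Phi mu u /\ (forall x, 0 <= u x) /\
  (forall x y, Phi x y <= u x + u y).

End Roommate.

From HB Require Import structures.
From mathcomp Require Import all_boot all_order all_algebra.
From mathcomp Require Import all_classical all_reals.
From mathcomp Require Import all_analysis.
From mathcomp Require Import ring lra.
Import numFieldNormedType.Exports.
Set Implicit Arguments. Unset Strict Implicit. Unset Printing Implicit Defensive.
Import Order.TTheory GRing.Theory Num.Theory.
Local Open Scope classical_set_scope.
Local Open Scope ring_scope.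

(* Linear programming duality, derived from Farkas' lemma (proved by Fourier-Motzkin
   elimination), applied to the continuum roommate problem with type distribution [f]
   gives stable payoffs [u] together with an optimal fractional assignment: [lam x y]
   pairs of types [(x, y)] and [sig x] singles, with [f x = sum_y (lam x y + lam y x) +
   sig x] and complementary slackness.  Scaling [(lam, sig)] by [r_k N^k], where
   [r_k -> 1] is chosen with [f r_k <= n^k / N^k], and rounding down yields integer
   matchings of subpopulations [m^k <= n^k].  Rounding preserves complementary
   slackness, so [u] stays stable for every [k], and [m^k / N^k -> f = lim n^k / N^k]
   makes both the removed share and its compensation cost vanish. *)

Lemma sum_mul_eq1 (R : pzSemiRingType) (T : finType) (F : T -> R) (t : T) :
  \sum_s F s * (s == t)%:R = F t.
Proof.
rewrite (bigD1 t) //= eqxx mulr1 big1 ?addr0 // => s /negPf->.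
by rewrite mulr0.
Qed.

Lemma sum_eq1_mul (R : pzSemiRingType) (T : finType) (F : T -> R) (t : T) :
  \sum_s (t == s)%:R * F s = F t.
Proof.
rewrite (bigD1 t) //= eqxx mul1r big1 ?addr0 // => s.
by rewrite eq_sym => /negPf->; rewrite mul0r.
Qed.

Lemma big_unit (R : Type) (idx : R) (op : Monoid.law idx) (F : unit -> R) :
  \big[op/idx]_(i : unit) F i = F tt.
Proof. by rewrite (big_pred1 tt) // => -[]. Qed.

Section Farkas.
Variables (R : realFieldType) (X I : finType).

Definition dot (d v : X -> R) : R := \sum_x d x * v x.

Definition in_cone (a : I -> X -> R) (A : {set I}) (b : X -> R) : Prop :=
  exists c : I -> R, [/\ forall i, 0 <= c i, forall i, i \notin A -> c i = 0
    & forall x, b x = \sum_i c i * a i x].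

Definition separating (a : I -> X -> R) (A : {set I}) (b d : X -> R) : Prop :=
  (forall i, i \in A -> 0 <= dot d (a i)) /\ dot d b < 0.

Lemma dotBl (al be : R) (v w z : X -> R) :
  dot (fun x => al * v x - be * w x) z = al * dot v z - be * dot w z.
Proof. by rewrite /dot !mulr_sumr -sumrB; apply: eq_bigr => x _; ring. Qed.

Lemma dotBr (al be : R) (v w z : X -> R) :
  dot z (fun x => al * v x - be * w x) = al * dot z v - be * dot z w.
Proof. by rewrite /dot !mulr_sumr -sumrB; apply: eq_bigr => x _; ring. Qed.

Lemma in_cone_subset a (A B : {set I}) b :
  A \subset B -> in_cone a A b -> in_cone a B b.
Proof.
move=> /fintype.subsetP AB [c [c0 cA cb]]; exists c; split=> // i Bi.
by apply: cA; apply: contra Bi; apply: AB.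
Qed.

Lemma farkas_set0 a b :
  in_cone a finset.set0 b \/ exists d, separating a finset.set0 b d.
Proof.
case: (boolP [forall x, b x == 0]) => [/forallP b0 | /forallPn [x0 bx0]].
  left; exists (fun=> 0); split=> // x.
  by rewrite (eqP (b0 x)) big1 // => i _; rewrite mul0r.
right; exists (fun x => - b x); split=> [i|]; first by rewrite inE.
rewrite /dot (eq_bigr (fun x => - (b x * b x))) => [|x _]; last by rewrite mulNr.
rewrite sumrN oppr_lt0 lt_def sumr_ge0 ?andbT => [|x _]; last exact: sqr_ge0.
rewrite psumr_neq0 => [|x _]; last exact: sqr_ge0.
by apply/hasP; exists x0; rewrite ?mem_index_enum // lt_def sqr_ge0 mulf_neq0.
Qed.

(* Fourier-Motzkin elimination of the generator [w]: [eliminate y w w = 0], and the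
   eliminated vectors are all annihilated by [dot y]. *)
Definition eliminate (y w v : X -> R) : X -> R :=
  fun x => dot y v * w x - dot y w * v x.

Lemma in_cone_eliminate a (A : {set I}) j b y :
    j \notin A -> dot y (a j) < 0 -> (forall i, i \in A -> 0 <= dot y (a i)) ->
    dot y b < 0 ->
  in_cone (fun i => eliminate y (a j) (a i)) A (eliminate y (a j) b) ->
  in_cone a (j |: A) b.
Proof.
move=> Aj yaj_lt0 yA yb [c [c0 cA cb]].
set S := \sum_i c i * dot y (a i).
have S0 : 0 <= S.
  apply: sumr_ge0 => i _; have [Ai|nAi] := boolP (i \in A).
    by rewrite mulr_ge0 ?yA.
  by rewrite cA ?mul0r.
set t := (dot y b - S) / dot y (a j).
have t0 : 0 <= t by rewrite /t ler_ndivlMr // mul0r subr_le0 (le_trans (ltW yb)).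
exists (fun i => c i + t * (i == j)%:R); split.
- by move=> i; rewrite addr_ge0 ?c0 // mulr_ge0 ?ler0n.
- move=> i; rewrite in_setU1 negb_or => /andP[/negPf ij /cA ->].
  by rewrite ij mulr0 addr0.
move=> x; under eq_bigr do rewrite mulrDl mulrAC.
rewrite big_split /= sum_mul_eq1.
have := cb x; rewrite /eliminate.
have -> : \sum_i c i * (dot y (a i) * a j x - dot y (a j) * a i x)
          = S * a j x - dot y (a j) * \sum_i c i * a i x.
  by rewrite /S mulr_suml mulr_sumr -sumrB; apply: eq_bigr => i _; ring.
have Ht : t * dot y (a j) = dot y b - S by rewrite /t divfK ?ltr0_neq0.
move=> E; apply: (mulfI (ltr0_neq0 yaj_lt0)).
rewrite mulrDr mulrCA mulrA Ht; lra.
Qed.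

Lemma separating_eliminate a (A : {set I}) j b y y' :
    separating (fun i => eliminate y (a j) (a i)) A (eliminate y (a j) b) y' ->
  separating a (j |: A) b (fun x => dot y' (a j) * y x - dot y (a j) * y' x).
Proof.
have dotE v : dot (fun x => dot y' (a j) * y x - dot y (a j) * y' x) v
              = dot y' (eliminate y (a j) v).
  by rewrite dotBl dotBr; ring.
move=> [y'A y'b]; split=> [i|]; rewrite dotE // in_setU1 => /predU1P[-> | /y'A //].
by rewrite dotBr mulrC subrr.
Qed.

Lemma farkas a (A : {set I}) b :
  in_cone a A b \/ exists d, separating a A b d.
Proof.
have [n cardA] : exists n, #|A| = n by eexists.
elim: n A cardA a b => [|n IH] A cardA a b.
  by move/eqP: cardA; rewrite cards_eq0 => /eqP->; exact: farkas_set0.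
have /finset.set0Pn [j Aj] : A != finset.set0 by rewrite -cards_eq0 cardA.
have cardAj : #|A :\ j| = n by move: cardA; rewrite (cardsD1 j) Aj add1n => -[].
have notAj : j \notin A :\ j by rewrite !inE eqxx.
have defA : A = j |: A :\ j by rewrite finset.setD1K.
have [coneAj | [y [yA yb]]] := IH _ cardAj a b.
  by left; apply: in_cone_subset coneAj; rewrite subD1set.
have [yaj_ge0 | yaj_lt0] := lerP 0 (dot y (a j)).
  right; exists y; split=> // i; rewrite defA in_setU1.
  by case/predU1P=> [-> // | /yA].
rewrite defA.
have [cone' | [y' sep']] :=
  IH _ cardAj (fun i => eliminate y (a j) (a i)) (eliminate y (a j) b).
  by left; apply: in_cone_eliminate cone'.
by right; eexists; apply: separating_eliminate sep'.
Qed.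

End Farkas.

Lemma farkas_ineq (R : realFieldType) (X J : finType) (M : X -> J -> R) (h : X -> R) :
  (exists w : J -> R, (forall j, 0 <= w j) /\ forall x, \sum_j M x j * w j <= h x) \/
  (exists d : X -> R, [/\ forall x, 0 <= d x, forall j, 0 <= \sum_x d x * M x j
     & \sum_x d x * h x < 0]).
Proof.
pose a (g : J + X) x : R := match g with inl j => M x j | inr x' => (x' == x)%:R end.
have [[c [c0 _ ch]] | [d [dA dh]]] := farkas a [set: J + X] h.
  left; exists (fun j => c (inl j)); split=> // x.
  rewrite ch big_sumType /= sum_mul_eq1.
  rewrite [\sum_i c _ * _](eq_bigr (fun j => M x j * c (inl j))) => [|j _].
    by rewrite lerDl.
  exact: mulrC.
right; exists d; split=> //.
- move=> x; have := dA (inr x) (finset.in_setT _).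
  by rewrite /dot /=; under eq_bigr do rewrite eq_sym; rewrite sum_mul_eq1.
- by move=> j; have := dA (inl j) (finset.in_setT _).
Qed.

Section LinearProgramming.
Variables (R : realFieldType) (I J : finType).
Variables (A : I -> J -> R) (b : I -> R) (c : J -> R).

Definition primal_feasible (z : J -> R) : Prop :=
  (forall j, 0 <= z j) /\ forall i, \sum_j A i j * z j <= b i.

Definition dual_feasible (y : I -> R) : Prop :=
  (forall i, 0 <= y i) /\ forall j, c j <= \sum_i y i * A i j.

Lemma scaled_weak_duality (al be : R) (z : J -> R) (y : I -> R) :
    (forall j, 0 <= z j) -> (forall i, 0 <= y i) ->
    (forall i, \sum_j A i j * z j <= be * b i) ->
    (forall j, al * c j <= \sum_i y i * A i j) ->
  al * \sum_j c j * z j <= be * \sum_i b i * y i.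
Proof.
move=> z0 y0 Az yA.
apply: (@le_trans _ _ (\sum_j \sum_i y i * A i j * z j)).
  rewrite mulr_sumr; apply: ler_sum => j _.
  by rewrite -mulr_suml mulrA ler_wpM2r.
rewrite exchange_big mulr_sumr; apply: ler_sum => i _ /=.
under eq_bigr do rewrite -mulrA.
by rewrite -mulr_sumr mulrC mulrA ler_wpM2r.
Qed.

Lemma weak_duality z y : primal_feasible z -> dual_feasible y ->
  \sum_j c j * z j <= \sum_i b i * y i.
Proof.
move=> [z0 Az] [y0 yA].
rewrite -[X in X <= _]mul1r -[X in _ <= X]mul1r.
by apply: scaled_weak_duality => // [i | j]; rewrite mul1r.
Qed.

(* The optimality system [M w <= h, w >= 0] in the unknowns [w = (y, z)]: the rows
   [inl (inl j)] read [c j <= (y A) j], the rows [inl (inr i)] read [(A z) i <= b i],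
   and the last row reads [b . y <= c . z]. *)
Definition optimality_matrix (r : (J + I) + unit) (v : I + J) : R :=
  match r, v with
  | inl (inl j), inl i => - A i j
  | inl (inr i), inr j => A i j
  | inr _, inl i => b i
  | inr _, inr j => - c j
  | _, _ => 0
  end.

Definition optimality_rhs (r : (J + I) + unit) : R :=
  match r with inl (inl j) => - c j | inl (inr i) => b i | inr _ => 0 end.

Lemma optimality_solution (w : I + J -> R) : (forall v, 0 <= w v) ->
    (forall r, \sum_v optimality_matrix r v * w v <= optimality_rhs r) ->
  [/\ primal_feasible (fun j => w (inr j)), dual_feasible (fun i => w (inl i))
    & \sum_i b i * w (inl i) <= \sum_j c j * w (inr j)].
Proof.
move=> w0 Mw.
have rowE r : \sum_v optimality_matrix r v * w v
    = \sum_i optimality_matrix r (inl i) * w (inl i)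
      + \sum_j optimality_matrix r (inr j) * w (inr j).
  by rewrite big_sumType.
split.
- split=> [j | i]; first exact: w0.
  have := Mw (inl (inr i)); rewrite rowE /= big1 ?add0r // => i' _.
  by rewrite mul0r.
- split=> [i | j]; first exact: w0.
  have := Mw (inl (inl j)); rewrite rowE /= [X in _ + X]big1 ?addr0 => [|j' _].
    rewrite lerNr; under eq_bigr do rewrite mulNr.
    by rewrite sumrN opprK; under eq_bigr do rewrite mulrC.
  by rewrite mul0r.
have := Mw (inr tt); rewrite rowE /=.
by under [X in _ + X]eq_bigr do rewrite mulNr; rewrite sumrN subr_le0.
Qed.

(* A certificate [d = (P, q, rho)] makes [P] and [q] [rho]-scaled primal and dual
   solutions with [b . q < c . P]; scaled weak duality rules this out, after pairing
   them with [y0] and [z0] when [rho = 0]. *)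
Lemma optimality_no_certificate z0 y0 (d : (J + I) + unit -> R) :
    primal_feasible z0 -> dual_feasible y0 -> (forall r, 0 <= d r) ->
    (forall v, 0 <= \sum_r d r * optimality_matrix r v) ->
  0 <= \sum_r d r * optimality_rhs r.
Proof.
move=> [z00 Az0] [y00 y0A] d0 dM.
pose P j := d (inl (inl j)); pose q i := d (inl (inr i)); pose rho := d (inr tt).
have colE v : \sum_r d r * optimality_matrix r v
    = \sum_j P j * optimality_matrix (inl (inl j)) v
      + \sum_i q i * optimality_matrix (inl (inr i)) v + rho * optimality_matrix (inr tt) v.
  by rewrite big_sumType big_sumType big_unit.
have AP i : \sum_j A i j * P j <= rho * b i.
  have := dM (inl i); rewrite colE /= [X in _ + X + _]big1 ?addr0 => [|i' _].
    by under eq_bigr do rewrite mulrN mulrC; rewrite sumrN addrC subr_ge0.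
  by rewrite mulr0.
have qA j : rho * c j <= \sum_i q i * A i j.
  have := dM (inr j); rewrite colE /= big1 ?add0r => [|j' _]; last by rewrite mulr0.
  by rewrite mulrN subr_ge0.
have P0 j : 0 <= P j by exact: d0.
have q0 i : 0 <= q i by exact: d0.
suff : \sum_j c j * P j <= \sum_i b i * q i.
  rewrite big_sumType big_sumType big_unit /= mulr0 addr0.
  under [X in _ -> _ <= X + _]eq_bigr do rewrite mulrN.
  rewrite sumrN addrC subr_ge0.
  by under eq_bigr do rewrite mulrC; under [X in _ <= X]eq_bigr do rewrite mulrC.
have [rho_gt0 | rho_le0] := ltrP 0 rho.
  by rewrite -(ler_pM2l rho_gt0) scaled_weak_duality.
have rho0 : rho = 0 by apply/eqP; rewrite eq_le rho_le0 d0.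
have cP_le0 : 1 * \sum_j c j * P j <= 0 * \sum_i b i * y0 i.
  apply: scaled_weak_duality => // [i | j]; first by apply: le_trans (AP i) _; rewrite rho0.
  by rewrite mul1r y0A.
have bq_ge0 : 0 * \sum_j c j * z0 j <= 1 * \sum_i b i * q i.
  apply: scaled_weak_duality => // [i | j]; first by rewrite mul1r Az0.
  by apply: le_trans (qA j); rewrite rho0.
by move: cP_le0 bq_ge0; rewrite !mul0r !mul1r => ? ?; lra.
Qed.

Theorem lp_duality z0 y0 : primal_feasible z0 -> dual_feasible y0 ->
  exists z y, [/\ primal_feasible z, dual_feasible y
                & \sum_j c j * z j = \sum_i b i * y i].
Proof.
move=> feas_z0 feas_y0.
have [[w [w0 Mw]] | [d [d0 dM dh]]] := farkas_ineq optimality_matrix optimality_rhs.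
  have [feas_z feas_y opt] := optimality_solution w0 Mw.
  exists (fun j => w (inr j)), (fun i => w (inl i)); split=> //.
  by apply/eqP; rewrite eq_le opt weak_duality.
by have := optimality_no_certificate feas_z0 feas_y0 d0 dM; rewrite leNgt dh.
Qed.

Lemma complementary_slackness z y :
    primal_feasible z -> dual_feasible y -> \sum_j c j * z j = \sum_i b i * y i ->
  (forall j, z j * (\sum_i y i * A i j - c j) = 0) /\
  (forall i, y i * (b i - \sum_j A i j * z j) = 0).
Proof.
move=> [z0 Az] [y0 yA] opt.
have slack_z j : 0 <= z j * (\sum_i y i * A i j - c j).
  by rewrite mulr_ge0 // subr_ge0.
have slack_y i : 0 <= y i * (b i - \sum_j A i j * z j).
  by rewrite mulr_ge0 // subr_ge0.
have yAz : \sum_j z j * (\sum_i y i * A i j) = \sum_i y i * (\sum_j A i j * z j).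
  under eq_bigr do rewrite mulr_sumr.
  rewrite exchange_big; apply: eq_bigr => i _.
  by rewrite mulr_sumr; apply: eq_bigr => j _; ring.
have gap0 : \sum_j z j * (\sum_i y i * A i j - c j)
            + \sum_i y i * (b i - \sum_j A i j * z j) = 0.
  under eq_bigr do rewrite mulrBr.
  under [X in _ + X]eq_bigr do rewrite mulrBr.
  have zc : \sum_j z j * c j = \sum_j c j * z j.
    by apply: eq_bigr => j _; exact: mulrC.
  have yb : \sum_i y i * b i = \sum_i b i * y i.
    by apply: eq_bigr => i _; exact: mulrC.
  by rewrite !sumrB yAz zc yb opt; lra.
have [sum_z0 sum_y0] : \sum_j z j * (\sum_i y i * A i j - c j) = 0 /\
                       \sum_i y i * (b i - \sum_j A i j * z j) = 0.
  have : 0 <= \sum_j z j * (\sum_i y i * A i j - c j) by apply: sumr_ge0.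
  have : 0 <= \sum_i y i * (b i - \sum_j A i j * z j) by apply: sumr_ge0.
  lra.
split=> [j | i]; first exact: (psumr_eq0P (fun j _ => slack_z j) sum_z0).
exact: (psumr_eq0P (fun i _ => slack_y i) sum_y0).
Qed.

End LinearProgramming.

Section RoommateLP.
Variables (R : realFieldType) (X : finType) (Phi : X -> X -> R).

Definition stable_payoff (u : X -> R) : Prop :=
  (forall x, 0 <= u x) /\ forall x y, Phi x y <= u x + u y.

Definition fractional_assignment (f : X -> R) (lam : X -> X -> R) (sig : X -> R) : Prop :=
  [/\ forall x y, 0 <= lam x y, forall x, 0 <= sig x
    & forall x, f x = \sum_y (lam x y + lam y x) + sig x].

Definition incidence (x : X) (p : X * X) : R := (x == p.1)%:R + (x == p.2)%:R.

Lemma sum_incidence_l (u : X -> R) (p : X * X) :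
  \sum_x u x * incidence x p = u p.1 + u p.2.
Proof. by under eq_bigr do rewrite mulrDr; rewrite big_split !sum_mul_eq1. Qed.

Lemma sum_incidence_r (lam : X * X -> R) (x : X) :
  \sum_p incidence x p * lam p = \sum_y (lam (x, y) + lam (y, x)).
Proof.
transitivity (\sum_y \sum_z incidence x (y, z) * lam (y, z)).
  by rewrite pair_bigA; apply: eq_bigr => -[].
rewrite /incidence /=.
under eq_bigr do under eq_bigr do rewrite mulrDl.
under eq_bigr do rewrite big_split -mulr_sumr /= sum_eq1_mul.
by rewrite big_split /= sum_eq1_mul -big_split.
Qed.

Lemma roommate_lp (f : X -> R) : (forall x, 0 <= f x) ->
  exists u lam sig, [/\ stable_payoff u, fractional_assignment f lam sig,
    forall x y, lam x y * (u x + u y - Phi x y) = 0 & forall x, sig x * u x = 0].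
Proof.
move=> f0.
pose c (p : X * X) := Phi p.1 p.2.
pose bound := \sum_p `|c p|.
have feas0 : primal_feasible incidence f (fun=> 0).
  by split=> // x; rewrite big1 // => p _; rewrite mulr0.
have feas_bound : dual_feasible incidence c (fun=> bound).
  split=> [x | p]; first exact: sumr_ge0.
  have : c p <= bound.
    by rewrite /bound (bigD1 p) //= (le_trans (ler_norm _)) // lerDl sumr_ge0.
  have : 0 <= bound by apply: sumr_ge0.
  by rewrite sum_incidence_l; lra.
have [z [u [[z0 Az] [u0 uA] opt]]] := lp_duality feas0 feas_bound.
have [cs_z cs_u] := complementary_slackness (conj z0 Az) (conj u0 uA) opt.
exists u, (fun x y => z (x, y)), (fun x => f x - \sum_p incidence x p * z p).
split.
- by split=> // x y; have := uA (x, y); rewrite sum_incidence_l.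
- split=> [x y | x | x]; first exact: z0.
    by rewrite subr_ge0.
  by rewrite sum_incidence_r addrC subrK.
- by move=> x y; have := cs_z (x, y); rewrite sum_incidence_l.
- by move=> x; rewrite mulrC cs_u.
Qed.

End RoommateLP.

Section PairMatching.
Variables (X : finType) (kap : X -> X -> nat) (tau : X -> nat).

Definition pair_matching (x y : X) : nat :=
  if x == y then kap x x else (kap x y + kap y x)%N.

Definition pair_population (x : X) : nat :=
  (\sum_y (kap x y + kap y x) + tau x)%N.

Lemma feasible_pair_matching : feasible pair_population pair_matching.
Proof.
split=> [x y | x].
  by rewrite /pair_matching eq_sym; case: eqVneq => [-> | _] //; rewrite addnC.
rewrite /pair_population [X in (_ <= X + _)%N](bigD1 x) //= /pair_matching eqxx.
rewrite (eq_bigr (fun y => kap x y + kap y x)%N) => [|y]; last first.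
  by rewrite eq_sym => /negPf->.
by rewrite mul2n -addnn leq_addr.
Qed.

Variables (R : realType) (Phi : X -> X -> R).
Hypothesis Phi_sym : forall x y, Phi x y = Phi y x.

Lemma surplusR_pair_matching :
  surplusR Phi pair_matching = \sum_x \sum_y (kap x y)%:R * Phi x y.
Proof.
pose K x y : R := (kap x y)%:R.
have swap : \sum_x \sum_(y | y != x) K y x * Phi x y
            = \sum_x \sum_(y | y != x) K x y * Phi x y.
  rewrite (exchange_big_dep predT) //=; apply: eq_bigr => x _.
  by apply: eq_big => [y | y _]; rewrite 1?eq_sym // Phi_sym.
have off_diag : \sum_x \sum_(y | y != x) (pair_matching x y)%:R * Phi x y / 2
                = \sum_x \sum_(y | y != x) K x y * Phi x y.
  transitivity ((\sum_x \sum_(y | y != x) K x y * Phi x y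
                 + \sum_x \sum_(y | y != x) K y x * Phi x y) / 2); last first.
    by rewrite swap; field.
  rewrite -big_split mulr_suml; apply: eq_bigr => x _.
  rewrite -big_split mulr_suml; apply: eq_bigr => y yx /=.
  by rewrite /pair_matching eq_sym (negPf yx) natrD; ring.
rewrite /surplusR off_diag -big_split; apply: eq_bigr => x _ /=.
by rewrite [in RHS](bigD1 x) //= /pair_matching eqxx.
Qed.

Lemma stable_pair_matching (u : X -> R) : stable_payoff Phi u ->
    (forall x y, (kap x y)%:R * (u x + u y - Phi x y) = 0) ->
    (forall x, (tau x)%:R * u x = 0) ->
  stable_outcome pair_population Phi pair_matching u.
Proof.
move=> stable_u cs_kap cs_tau; split=> //; split; first exact: feasible_pair_matching.
rewrite surplusR_pair_matching.
have pop_u x : (pair_population x)%:R * u x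
    = \sum_y ((kap x y)%:R * u x + (kap y x)%:R * u x) + (tau x)%:R * u x.
  rewrite natrD natr_sum mulrDl mulr_suml.
  by congr (_ + _); apply: eq_bigr => y _; rewrite natrD mulrDl.
rewrite (eq_bigr _ (fun x _ => pop_u x)) big_split /= [X in _ + X]big1 ?addr0.
  under eq_bigr do rewrite big_split /=.
  rewrite big_split /= [X in _ + X]exchange_big -big_split /=.
  apply: eq_bigr => x _; rewrite -big_split /=; apply: eq_bigr => y _.
  by apply/eqP; rewrite -subr_eq0 -(cs_kap x y) mulrBr mulrDr.
by move=> x _; exact: cs_tau.
Qed.

End PairMatching.

Section Limits.
Variable R : realType.

Lemma cvg_sum (T : Type) (F : set_system T) (FF : Filter F) (I : finType)
    (G : I -> T -> R) (l : I -> R) :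
  (forall i, G i t @[t --> F] --> l i) -> \sum_i G i t @[t --> F] --> \sum_i l i.
Proof. by move=> Gl; apply: cvg_big => //; exact: add_continuous. Qed.

Lemma cvg_max0 (g : nat -> R) (l : R) : 0 <= l ->
  g k @[k --> \oo] --> l -> Num.max 0 (g k) @[k --> \oo] --> l.
Proof.
move=> l0 gl; rewrite -[X in _ --> X](max_r l0).
by apply: continuous2_cvg => //; [exact: (@max_continuous _ R (0, l)) | exact: cvg_cst].
Qed.

Lemma cvg_lower_scale (X : finType) (p : nat -> X -> R) (f : X -> R) :
    (forall k x, 0 <= p k x) -> (forall x, 0 <= f x) ->
    (forall x, p k x @[k --> \oo] --> f x) ->
  exists r : nat -> R,
    [/\ forall k, 0 <= r k, r k @[k --> \oo] --> (1 : R) & forall k x, f x * r k <= p k x].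
Proof.
move=> p0 f0 pf.
(* [f x * g k <= f x - |p k x - f x| <= p k x], the summand [y = x] contributing exactly
   [|p k x - f x|]; summands with [f y = 0] vanish, as [_ / 0 = 0]. *)
pose g k := 1 - \sum_y `|p k y - f y| / f y.
exists (fun k => Num.max 0 (g k)); split.
- by move=> k; rewrite le_max lexx.
- have dev0 : \sum_y `|p k y - f y| / f y @[k --> \oo] --> (\sum_(y : X) 0 : R).
    apply: cvg_sum => y; rewrite -(mul0r (f y)^-1).
    apply: cvgM; last exact: cvg_cst.
    rewrite -(@normr0 _ R); apply: cvg_norm; rewrite -(subrr (f y)).
    by apply: cvgB; [exact: pf | exact: cvg_cst].
  rewrite big1_eq in dev0; apply: cvg_max0 => //.
  by rewrite -[X in _ --> X]subr0; apply: cvgB dev0; exact: cvg_cst.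
move=> k x /=; have [g_ge0 | g_lt0] := lerP 0 (g k); last first.
  by rewrite mulr0.
have [-> | fx0] := eqVneq (f x) 0; first by rewrite mul0r.
have dev_x : f x * (`|p k x - f x| / f x) <= f x * \sum_y `|p k y - f y| / f y.
  rewrite ler_wpM2l // (bigD1 x) //= lerDl.
  by apply: sumr_ge0 => y _; rewrite divr_ge0.
have : f x - p k x <= `|p k x - f x| by rewrite distrC ler_norm.
move: dev_x; rewrite mulrCA mulfV // mulr1 /g mulrBr mulr1; lra.
Qed.

Lemma cvg_truncn_scale (c : R) (r N : nat -> R) : 0 <= c ->
    r k @[k --> \oo] --> (1 : R) -> N k @[k --> \oo] --> +oo ->
  (Num.truncn (c * (r k * N k)))%:R / N k @[k --> \oo] --> c.
Proof.
move=> c0 r1 Noo.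
have N_gt0 : \forall k \near \oo, 0 < N k by exact: cvgry_gt.
have r_gt0 : \forall k \near \oo, 0 < r k by exact: (cvgr_gt 1 r1 0 ltr01).
have Ninv0 : (N k)^-1 @[k --> \oo] --> (0 : R) by exact: (gtr0_cvgV0 N_gt0).2.
have cr : c * r k @[k --> \oo] --> c.
  by rewrite -[X in _ --> X]mulr1; apply: cvgM => //; exact: cvg_cst.
apply: (@squeeze_cvgr _ _ _ _ (fun k => c * r k - (N k)^-1) (fun k => c * r k)).
- move: N_gt0 r_gt0; apply: filterS2 => k Nk rk.
  have x0 : 0 <= c * (r k * N k) by rewrite mulr_ge0 // mulr_ge0 // ltW.
  have [lo hi] : c * (r k * N k) - 1 <= (Num.truncn (c * (r k * N k)))%:R
                 /\ (Num.truncn (c * (r k * N k)))%:R <= c * (r k * N k).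
    by have := truncnS_gt (c * (r k * N k)); rewrite truncn_le x0 -natr1; lra.
  apply/andP; split; last by rewrite ler_pdivrMr //; lra.
  by rewrite ler_pdivlMr // mulrBl mulVf ?gt_eqF //; lra.
- by rewrite -[X in _ --> X]subr0; apply: cvgB.
- exact: cr.
Qed.

Lemma cvg_deficit (X : finType) (n m : nat -> X -> nat) (D : nat -> R) (f w : X -> R) :
    (forall k x, (m k x <= n k x)%N) ->
    (forall x, (n k x)%:R / D k @[k --> \oo] --> f x) ->
    (forall x, (m k x)%:R / D k @[k --> \oo] --> f x) ->
  (\sum_x ((n k x - m k x)%N)%:R * w x) / D k @[k --> \oo] --> (0 : R).
Proof.
move=> mn nf mf.
have gap0 : \sum_x ((n k x)%:R / D k - (m k x)%:R / D k) * w x @[k --> \oo]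
            --> (\sum_(x : X) 0 : R).
  apply: cvg_sum => x; rewrite -(mul0r (w x)) -(subrr (f x)).
  by apply: cvgM; [exact: cvgB | exact: cvg_cst].
rewrite big1_eq in gap0; apply: cvg_trans gap0; apply: near_eq_cvg; apply: nearW => k.
by rewrite mulr_suml; apply: eq_bigr => x _; rewrite natrB // -mulrBl mulrAC.
Qed.

End Limits.

Section Rounding.
Variables (R : realType) (X : finType) (lam : X -> X -> R) (sig : X -> R).
Hypotheses (lam_ge0 : forall x y, 0 <= lam x y) (sig_ge0 : forall x, 0 <= sig x).

Lemma truncn_mul_eq0 (c g s : R) : c * g = 0 -> (Num.truncn (c * s))%:R * g = 0.
Proof.
move/eqP; rewrite mulf_eq0 => /orP[/eqP-> | /eqP->]; last by rewrite mulr0.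
by rewrite mul0r truncn0 mul0r.
Qed.

Definition rounded_pairs (s : R) (x y : X) : nat := Num.truncn (lam x y * s).

Definition rounded_singles (s : R) (x : X) : nat := Num.truncn (sig x * s).

Lemma rounded_population_le (s : R) (x : X) : 0 <= s ->
  (pair_population (rounded_pairs s) (rounded_singles s) x)%:R
    <= (\sum_y (lam x y + lam y x) + sig x) * s.
Proof.
move=> s0; rewrite natrD natr_sum mulrDl mulr_suml.
apply: lerD; last by rewrite truncn_le mulr_ge0.
apply: ler_sum => y _; rewrite natrD mulrDl.
by apply: lerD; rewrite truncn_le mulr_ge0.
Qed.

Lemma cvg_rounded_population (r N : nat -> R) (x : X) :
    r k @[k --> \oo] --> (1 : R) -> N k @[k --> \oo] --> +oo ->
  (pair_population (rounded_pairs (r k * N k)) (rounded_singles (r k * N k)) x)%:R / N k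
    @[k --> \oo] --> \sum_y (lam x y + lam y x) + sig x.
Proof.
move=> r1 Noo; under eq_cvg do rewrite natrD natr_sum mulrDl mulr_suml.
apply: cvgD; last exact: cvg_truncn_scale.
apply: cvg_sum => y; under eq_cvg do rewrite natrD mulrDl.
by apply: cvgD; exact: cvg_truncn_scale.
Qed.

End Rounding.

Theorem proposition3 (R : realType) (X : finType) (HX : (0 < #|X|)%N)
  (Phi : X -> X -> R) (Phi_sym : forall x y, Phi x y = Phi y x)
  (n : nat -> X -> nat) (f : X -> R)
  (HN : (fun k => ((\sum_x n k x)%N)%:R : R) @ \oo --> +oo)
  (Hf : forall x, (fun k => (n k x)%:R / ((\sum_y n k y)%N)%:R : R) @ \oo --> f x) :
  exists (m : nat -> X -> nat) (mu : nat -> X -> X -> nat) (u : nat -> X -> R),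
    (forall k x, (m k x <= n k x)%N) /\
    (forall k, stable_outcome (m k) Phi (mu k) (u k)) /\
    ((fun k => (((\sum_x n k x)%N)%:R - ((\sum_x m k x)%N)%:R)
                 / ((\sum_x n k x)%N)%:R : R) @ \oo --> 0) /\
    ((fun k => (\sum_x ((n k x - m k x)%N)%:R * u k x)
                 / ((\sum_x n k x)%N)%:R : R) @ \oo --> 0).
Proof.
set N := fun k => ((\sum_x n k x)%N)%:R : R.
have p_ge0 k x : 0 <= (n k x)%:R / N k by rewrite divr_ge0.
have f_ge0 x : 0 <= f x by apply: cvgr_to_ge (Hf x) _; apply: nearW.
have [u [lam [sig [stable_u [lam_ge0 sig_ge0 f_decomp] cs_lam cs_sig]]]] :=
  roommate_lp Phi f_ge0.
have [r [r_ge0 r1 fr_le]] := cvg_lower_scale p_ge0 f_ge0 Hf.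
pose s k := r k * N k.
pose m k := pair_population (rounded_pairs lam (s k)) (rounded_singles sig (s k)).
have m_le_n k x : (m k x <= n k x)%N.
  have s_ge0 : 0 <= s k by rewrite mulr_ge0.
  rewrite -(ler_nat R); apply: le_trans (rounded_population_le lam_ge0 sig_ge0 x s_ge0) _.
  rewrite -f_decomp /s mulrA; have [-> | N_neq0] := eqVneq (N k) 0; first by rewrite mulr0.
  by rewrite -[leRHS](divfK N_neq0) ler_wpM2r.
have m_cvg x : (m k x)%:R / N k @[k --> \oo] --> f x.
  by rewrite f_decomp; exact: cvg_rounded_population.
exists m, (fun k => pair_matching (rounded_pairs lam (s k))), (fun=> u).
split; first exact: m_le_n.
split.
  move=> k; apply: stable_pair_matching => // [x y | x]; exact: truncn_mul_eq0.
split; last exact: cvg_deficit m_le_n Hf m_cvg.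
apply: cvg_trans (cvg_deficit (fun=> 1) m_le_n Hf m_cvg).
apply: near_eq_cvg; apply: nearW => k /=.
rewrite (eq_bigr (fun x => (n k x)%:R - (m k x)%:R)) => [|x _]; last by rewrite mulr1 natrB.
by rewrite sumrB !natr_sum.
Qed.
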